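(* Let $(\Omega,\mathcal F,\mathbb P)$ be a probability space carrying a group of measurable bijections $\{\theta_n\}_{n\in\mathbb Z}$ each preserving $\mathbb P$, and let $\{a_n\}_{n\in\mathbb Z}$ be i.i.d. random variables with values in $\{1,2,\dots\}$, compatible with the flow, with $\mathbb E[a_0]<\infty$ and $\mathbb P[a_0=1]>0$. Let $N_n=\#\{m\in\mathbb Z: m<n,\ m+a_m>n\}+1$ and $\Psi^o=\{m\in\mathbb Z:N_m=1\}$. Then under the Palm probability $\mathbb P_{\Psi^o}[\cdot]=\mathbb P[\cdot\mid 0\in\Psi^o]=\mathbb P[\cdot\mid N_0=1]$, the sequence $\{a_n\}_{n<0}$ is independent of $\{a_n\}_{n\ge 0}$.
   Context: A flow-compatible sequence means $a_n(\omega)=a_0(\theta_n\omega)$ for all $n$. The event $\{0\in\Psi^o\}$ has positive probability under these assumptions, so the conditional probability is well defined. *)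

From HB Require Import structures.
From mathcomp Require Import all_boot all_order all_algebra.
From mathcomp Require Import all_classical all_reals all_analysis.
Set Implicit Arguments. Unset Strict Implicit. Unset Printing Implicit Defensive.
Import Order.TTheory GRing.Theory Num.Theory.
Local Open Scope classical_set_scope.
Local Open Scope ring_scope.

Section Defs.
Context (d : measure_display) (T : measurableType d) (R : realType).

Definition gen_sigma (a : int -> T -> nat) (I : set int) : set (set T) :=
  <<s \bigcup_(n in I) [set a n @^-1` B | B in [set: set nat]] >>.

(* { m : m < n, m + a_m > n } ; N_n = #(this set) + 1 *)
Definition Nset (a : int -> T -> nat) (n : int) (w : T) : set int :=
  [set m | m < n /\ n < m + (a m w)%:Z].

Definition N_is_one (a : int -> T -> nat) (n : int) (w : T) : Prop :=
  Nset a n w = set0.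

Definition Psio (a : int -> T -> nat) (w : T) : set int :=
  [set m | N_is_one a m w].

Definition mutually_indep (P : probability T R) (a : int -> T -> nat) : Prop :=
  forall (s : seq int) (B : int -> set nat), uniq s ->
    (forall n, measurable (a n @^-1` B n)) ->
    fine (P (\bigcap_(n in [set` s]) a n @^-1` B n)) =
    \prod_(n <- s) fine (P (a n @^-1` B n)).

Definition ident_distr (P : probability T R) (a : int -> T -> nat) : Prop :=
  forall n (B : set nat), P (a n @^-1` B) = P (a 0 @^-1` B).

Definition condP (P : probability T R) (C A : set T) : R :=
  fine (P (A `&` C)) / fine (P C).

End Defs.

From HB Require Import structures.
From mathcomp Require Import all_boot all_order all_algebra.
From mathcomp Require Import all_classical all_reals all_analysis.
From mathcomp Require Import ring zify.

(* The event {N_0 = 1} is {a_m <= -m for every m < 0}, so it belongs to the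
   sigma-algebra of the past {a_n}_(n<0).  Past and future are independent
   (pi-lambda theorem applied to finite cylinders), hence for a past A and a
   future B both A `&` C and C are past events, P(A & B & C) = P(A & C) P(B)
   and P(B & C) = P(C) P(B); dividing by P(C) gives the factorization. *)

Set Implicit Arguments.
Unset Strict Implicit.
Unset Printing Implicit Defensive.
Import Order.TTheory GRing.Theory Num.Theory.
Local Open Scope classical_set_scope.
Local Open Scope ring_scope.

Section cylinders.
Variables (T : Type) (a : int -> T -> nat).

Definition cyl (s : seq int) (B : int -> set nat) : set T :=
  \bigcap_(n in [set` s]) a n @^-1` B n.

Definition cylinders (I : set int) : set (set T) :=
  [set X | exists s B, (forall n, n \in s -> I n) /\ X = cyl s B].

Lemma cyl_undup s B : cyl (undup s) B = cyl s B.
Proof. by congr bigcap; apply/seteqP; split => n /=; rewrite mem_undup. Qed.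

Lemma cylI s t B C : cyl s B `&` cyl t C =
  cyl (s ++ t) (fun n => (if n \in s then B n else setT) `&`
                         (if n \in t then C n else setT)).
Proof.
apply/seteqP; split => w /=.
  move=> [Bw Cw] n _ /=.
  by split; case: ifP => // n_in; [exact: Bw | exact: Cw].
move=> stw; split => n /= n_in.
  by have := stw n; rewrite /= mem_cat n_in => /(_ isT) [].
by have := stw n; rewrite /= mem_cat n_in orbT => /(_ isT) [].
Qed.

Lemma cylinders_setI_closed I : setI_closed (cylinders I).
Proof.
move=> _ _ [s [B [sI ->]]] [t [C [tI ->]]]; rewrite cylI.
by eexists _, _; split; last reflexivity; move=> n; rewrite mem_cat => /orP[/sI|/tI].
Qed.

End cylinders.

Section independence.
Context d (T : measurableType d) (R : realType) (P : probability T R).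

Definition indep_of (Y : set T) : set (set T) :=
  [set X | measurable X /\ P (X `&` Y) = (P X * P Y)%E].

Lemma indep_of_lambda_system Y : measurable Y -> lambda_system setT (indep_of Y).
Proof.
move=> mY; split => //.
- by split; [exact: measurableT | rewrite setTI probability_setT mul1e].
- move=> X Z ZX [mX XY] [mZ ZY]; split; first exact: measurableD.
  have mXY := measurableI _ _ mX mY.
  rewrite [in RHS]measureD ?ltey_eq ?fin_num_measure //.
  rewrite setIDAC setIDA measureD ?ltey_eq ?fin_num_measure //.
  rewrite setIAC (setIidr ZX) muleBl ?fin_num_adde_defl ?fin_numN ?fin_num_measure //.
  by congr (_ - _)%E; [exact: XY | exact: ZY].
- move=> F ndF FY; have mF n := (FY n).1.
  have mU := bigcupT_measurable _ mF; split => //.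
  have ndFY : nondecreasing_seq (fun n => F n `&` Y).
    by move=> n m nm; apply/subsetPset; apply: setSI; apply/subsetPset; exact: ndF.
  have := @nondecreasing_cvg_mu _ _ _ P _ (fun n => measurableI _ _ (mF n) mY)
    (bigcupT_measurable _ (fun n => measurableI _ _ (mF n) mY)) ndFY.
  rewrite -setI_bigcupl (_ : P \o _ = (fun n => P (F n) * P Y)%E); last first.
    by apply/funext => n /=; rewrite (FY n).2.
  have cvgF := @nondecreasing_cvg_mu _ _ _ P _ mF mU ndF.
  by move=> cvgFY; exact: (cvg_unique _ cvgFY (cvgeZr (fin_num_measure P _ mY) cvgF)).
Qed.

(* When P C = 0 both sides are 0, since x / 0 = 0. *)
Lemma condP_setI_indep A B C :
  measurable (A `&` C) -> measurable B -> measurable C ->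
  P (A `&` C `&` B) = (P (A `&` C) * P B)%E -> P (C `&` B) = (P C * P B)%E ->
  condP P C (A `&` B) = condP P C A * condP P C B.
Proof.
move=> mAC mB mC ACB CB.
rewrite /condP setIAC ACB [B `&` C]setIC CB !fineM ?fin_num_measure //.
have [->|PC_neq0] := eqVneq (fine (P C)) 0; first by rewrite invr0 !mulr0.
by field.
Qed.

Lemma g_sigma_indep (G H : set (set T)) :
  setI_closed G -> setI_closed H -> G `<=` measurable -> H `<=` measurable ->
  (forall X Y, G X -> H Y -> P (X `&` Y) = (P X * P Y)%E) ->
  forall X Y, <<s G >> X -> <<s H >> Y -> P (X `&` Y) = (P X * P Y)%E.
Proof.
move=> GI HI mG mH GH.
have indep_H Y : H Y -> <<s G >> `<=` indep_of Y.
  move=> HY; apply: (lambda_system_subset GI (indep_of_lambda_system (mH _ HY))).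
    by move=> X GX; split; [exact: mG | exact: GH].
  by [].
move=> X Y sGX; suff : <<s H >> `<=` indep_of X.
  by move=> /[apply] -[_]; rewrite setIC muleC.
apply: (lambda_system_subset HI (indep_of_lambda_system _)); last by [].
  exact: (smallest_sub (@sigma_algebra_measurable _ T) mG sGX).
move=> Z HZ; split; first exact: mH.
by have [_] := indep_H Z HZ X sGX; rewrite setIC muleC.
Qed.

End independence.

Section generated_sigma_algebra.
Context d (T : measurableType d) (a : int -> T -> nat).

Let generators I := \bigcup_(n in I) [set a n @^-1` B | B in [set: set nat]].

Lemma gen_sigmaI I : setI_closed (gen_sigma a I).
Proof. exact: (@measurableI _ (g_sigma_algebraType (generators I))). Qed.

Lemma gen_sigma_bigcap I (F : (set T)^nat) :
  (forall k, gen_sigma a I (F k)) -> gen_sigma a I (\bigcap_k F k).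
Proof. exact: (@bigcapT_measurable _ (g_sigma_algebraType (generators I))). Qed.

Lemma gen_sigma_sub_cylinders I : gen_sigma a I `<=` <<s cylinders a I >>.
Proof.
apply: sub_smallest2r; first exact: smallest_sigma_algebra.
move=> _ [n In [B _ <-]]; exists [:: n], (fun=> B); split.
  by move=> m; rewrite inE => /eqP ->.
apply/seteqP; split => w /=; first by move=> Bw m; rewrite /= inE => /eqP ->.
by apply; rewrite /= inE.
Qed.

Lemma N_is_one_bigcap n : [set w | N_is_one a n w] =
  \bigcap_(k : nat) a (n - k.+1%:Z) @^-1` [set j | (j <= k.+1)%N].
Proof.
apply/seteqP; split => w /=.
  move=> Nw k _ /=; rewrite leqNgt; apply/negP => ak.
  have : Nset a n w (n - k.+1%:Z) by split; lia.
  by rewrite Nw.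
move=> wk; apply/seteqP; split => // m [mn nm].
have := wk `|n - m|.-1 I; rewrite /=.
have -> : n - (`|n - m|.-1).+1%:Z = m by lia.
lia.
Qed.

Lemma N_is_one_gen_sigma n : gen_sigma a [set m | m < n] [set w | N_is_one a n w].
Proof.
rewrite N_is_one_bigcap; apply: gen_sigma_bigcap => k.
apply: sub_sigma_algebra; exists (n - k.+1%:Z); first by rewrite /= ltrBlDl ltrDr.
by exists [set j | (j <= k.+1)%N].
Qed.

End generated_sigma_algebra.

Section gen_sigma_independence.
Context d (T : measurableType d) (R : realType) (P : probability T R).
Variable a : int -> T -> nat.
Hypothesis a_meas : forall n (B : set nat), measurable (a n @^-1` B).
Hypothesis a_indep : mutually_indep P a.

Lemma cyl_measurable s B : measurable (cyl a s B).
Proof. by apply: fin_bigcap_measurable => [|n _]; [exact: finite_seq | exact: a_meas]. Qed.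

Lemma gen_sigma_measurable I : gen_sigma a I `<=` measurable.
Proof.
apply: smallest_sub; first exact: sigma_algebra_measurable.
by move=> _ [n _ [B _ <-]]; exact: a_meas.
Qed.

Lemma cylinders_indep I J : I `&` J = set0 -> forall X Y,
  cylinders a I X -> cylinders a J Y -> P (X `&` Y) = (P X * P Y)%E.
Proof.
move=> IJ _ _ [s [B [sI ->]]] [t [C [tJ ->]]].
(* mutually_indep only speaks about duplicate-free index lists. *)
rewrite -(cyl_undup _ s) -(cyl_undup _ t) cylI.
set u := undup s; set v := undup t.
have u_notin_v n : n \in u -> n \notin v.
  rewrite !mem_undup => /sI In; apply/negP => /tJ Jn.
  by have : (I `&` J) n by []; rewrite IJ.
have uniq_uv : uniq (u ++ v).
  rewrite cat_uniq !undup_uniq andbT; apply/hasPn => n nv.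
  by apply/negP => /u_notin_v; rewrite nv.
have v_notin_u n : n \in v -> n \notin u.
  by move=> nv; apply/negP => /u_notin_v; rewrite nv.
transitivity ((fine (P (cyl a u B)) * fine (P (cyl a v C)))%:E); last first.
  by rewrite EFinM !fineK //; apply: fin_num_measure; exact: cyl_measurable.
rewrite -[LHS]fineK; last by apply: fin_num_measure; exact: cyl_measurable.
congr (_%:E).
rewrite /cyl [LHS]a_indep // big_cat /= !a_indep ?undup_uniq //.
congr (_ * _); apply: eq_big_seq => n n_in.
  by rewrite n_in (negbTE (u_notin_v n n_in)) setIT.
by rewrite n_in (negbTE (v_notin_u n n_in)) setTI.
Qed.

Lemma cylinders_measurable I : cylinders a I `<=` measurable.
Proof. by move=> _ [s [B [_ ->]]]; exact: cyl_measurable. Qed.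

Lemma gen_sigma_indep I J : I `&` J = set0 -> forall X Y,
  gen_sigma a I X -> gen_sigma a J Y -> P (X `&` Y) = (P X * P Y)%E.
Proof.
move=> IJ X Y /gen_sigma_sub_cylinders IX /gen_sigma_sub_cylinders JY.
apply: (g_sigma_indep _ _ _ _ _ IX JY).
- exact: cylinders_setI_closed.
- exact: cylinders_setI_closed.
- exact: cylinders_measurable.
- exact: cylinders_measurable.
- exact: cylinders_indep.
Qed.

End gen_sigma_independence.

Theorem mainTheorem2 (d : measure_display) (T : measurableType d) (R : realType)
  (P : probability T R) (theta : int -> T -> T) (a : int -> T -> nat)
  (* group of measurable bijections preserving P *)
  (theta_meas : forall n, measurable_fun setT (theta n))
  (theta0 : forall w, theta 0 w = w)
  (thetaD : forall n m w, theta (n + m) w = theta n (theta m w))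
  (theta_pres : forall n (A : set T), measurable A ->
     P (theta n @^-1` A) = P A)
  (* the a_n are random variables with values in {1,2,...} *)
  (a_meas : forall n (B : set nat), measurable (a n @^-1` B))
  (a_pos : forall n w, (0 < a n w)%N)
  (* i.i.d. *)
  (a_indep : mutually_indep P a)
  (a_ident : ident_distr P a)
  (* compatible with the flow *)
  (a_flow : forall n w, a n w = a 0 (theta n w))
  (* E[a_0] < oo and P[a_0 = 1] > 0 *)
  (a_int : (\int[P]_w ((a (0:int) w)%:R : R)%:E < +oo)%E)
  (a_one : (0 < P (a (0:int) @^-1` [set 1%N]))%E) :
  let C := [set w | Psio a w (0 : int)] in
  forall A B : set T,
    gen_sigma a [set n | n < 0] A ->
    gen_sigma a [set n | 0 <= n] B ->
    condP P C (A `&` B) = condP P C A * condP P C B.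
Proof.
move=> C A B pastA futureB.
have pastC : gen_sigma a [set n | n < 0] C by exact: N_is_one_gen_sigma.
have pastAC := gen_sigmaI pastA pastC.
have past_future : [set n : int | n < 0] `&` [set n | 0 <= n] = set0.
  by apply/seteqP; split => // n [/= n_lt0]; rewrite leNgt n_lt0.
have measurable_gen := gen_sigma_measurable a_meas.
have indep := gen_sigma_indep a_meas a_indep past_future.
apply: condP_setI_indep.
- exact: measurable_gen pastAC.
- exact: measurable_gen futureB.
- exact: measurable_gen pastC.
- exact: indep pastAC futureB.
- exact: indep pastC futureB.
Qed.
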